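(* Consider a tree power network $(\mathcal{V},\mathcal{E})$, $\mathcal{V}=\{1,\dots,n\}$, with fixed voltage magnitudes $|V_i|=\overline{V}_i>0$ and angle limits satisfying $$-\tan^{-1}\!\Big(\frac{b_{ik}}{g_{ik}}\Big)<\underline{\theta}_{ik}\le\overline{\theta}_{ik}<\tan^{-1}\!\Big(\frac{b_{ik}}{g_{ik}}\Big)\quad\text{for all }(i,k)\in\mathcal{E},$$ with $\underline{\theta}_{ik}\in[-\pi,0]$, $\overline{\theta}_{ik}\in[0,\pi]$. Consider the OPF problem with load vector $\mathbf{p}_D=(P_{D_1},\dots,P_{D_n})$: minimize $\sum_{i\in\mathcal{V}}f_i(P_{G_i})$ subject to $\underline{P}_{G_i}\le P_{G_i}\le\overline{P}_{G_i}$ and $P_{G_i}-P_{D_i}=\sum_{k\sim i}P_{ik}$ for $i\in\mathcal{V}$, and $(P_{ik},P_{ki})\in\mathcal{F}_{\theta_{ik}}$ for $(i,k)\in\mathcal{E}$, where each $f_i$ is monotonically increasing and convex. Let $f^*_{\boldsymbol\epsilon}$ be its optimal value when $\mathbf{p}_D$ is replaced by $\mathbf{p}_D+\boldsymbol\epsilon$, assume $f^*_{\boldsymbol\epsilon}$ is differentiable at $\boldsymbol\epsilon=0$, and let $\lambda_1,\dots,\lambda_n$ be the locational marginal prices, i.e. the numbers such that $\sum_i\lambda_i\epsilon_i$ is the first-order approximation of $f^*_{\boldsymbol\epsilon}-f^*_0$. Then for every $i\in\mathcal{V}$: (1) $\lambda_i$ equals the Lagrange multiplier of the power balance equation $P_{G_i}-P_{D_i}=\sum_{k\sim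 i}P_{ik}$ in the convexified OPF problem (the same problem with each constraint $(P_{ik},P_{ki})\in\mathcal{F}_{\theta_{ik}}$ replaced by $(P_{ik},P_{ki})\in\mathrm{conv}(\mathcal{F}_{\theta_{ik}})$); (2) $\lambda_i\ge0$.
   Context: Each line $(i,k)\in\mathcal{E}$ has admittance $y_{ik}=g_{ik}-jb_{ik}$ with $g_{ik},b_{ik}\ge0$. For $\theta_{ik}=\theta_i-\theta_k$ (difference of bus voltage phases), the line flows are $P_{ik}=\overline{V}_i^2 g_{ik}+\overline{V}_i\overline{V}_k b_{ik}\sin\theta_{ik}-\overline{V}_i\overline{V}_k g_{ik}\cos\theta_{ik}$ and $P_{ki}=\overline{V}_k^2 g_{ik}-\overline{V}_i\overline{V}_k b_{ik}\sin\theta_{ik}-\overline{V}_i\overline{V}_k g_{ik}\cos\theta_{ik}$. $\mathcal{F}_{\theta_{ik}}\subset\mathbb{R}^2$ is the set of pairs $(P_{ik},P_{ki})$ obtained as $\theta_{ik}$ ranges over $[\underline{\theta}_{ik},\overline{\theta}_{ik}]$. $P_{G_i}$ denotes the generation and $P_{D_i}$ the load at bus $i$; $\mathrm{conv}$ denotes convex hull. *)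

From mathcomp Require Import all_boot all_order all_algebra.
From mathcomp Require Import all_classical all_reals all_analysis.

Set Implicit Arguments.
Unset Strict Implicit.
Unset Printing Implicit Defensive.

Import Order.TTheory GRing.Theory Num.Theory.
Local Open Scope classical_set_scope.
Local Open Scope ring_scope.

Section Defs.
Variable R : realType.

(* Active line flows P_ik and P_ki as functions of the angle difference. *)
Definition line_Pik (Vi Vk g b th : R) : R :=
  Vi ^+ 2 * g + Vi * Vk * b * sin th - Vi * Vk * g * cos th.
Definition line_Pki (Vi Vk g b th : R) : R :=
  Vk ^+ 2 * g - Vi * Vk * b * sin th - Vi * Vk * g * cos th.

Definition flow_region (Vi Vk g b thlo thhi : R) : set (R * R) :=
  [set p | exists th, thlo <= th <= thhi /\
     p = (line_Pik Vi Vk g b th, line_Pki Vi Vk g b th)].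

Definition convex_hull (A : set (R * R)) : set (R * R) :=
  [set p | exists (k : nat) (w : 'I_k -> R) (q : 'I_k -> R * R),
     (forall j, 0 <= w j) /\ \sum_(j < k) w j = 1 /\ (forall j, A (q j)) /\
     p = (\sum_(j < k) w j * (q j).1, \sum_(j < k) w j * (q j).2)].

(* tan^{-1}(b/g), with the convention tan^{-1}(b/0) = pi/2 *)
Definition arctan_ratio (b g : R) : R :=
  if g == 0 then pi / 2 else atan (b / g).

Definition edge_region n m (ends : 'I_m -> 'I_n * 'I_n) (V : 'I_n -> R)
  (g b thlo thhi : 'I_m -> R) (j : 'I_m) : set (R * R) :=
  flow_region (V (ends j).1) (V (ends j).2) (g j) (b j) (thlo j) (thhi j).

Definition net_flow n m (ends : 'I_m -> 'I_n * 'I_n) (x : 'I_m -> R * R)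
  (i : 'I_n) : R :=
  \sum_(j < m | (ends j).1 == i) (x j).1 + \sum_(j < m | (ends j).2 == i) (x j).2.

Definition opf_feasible n m (ends : 'I_m -> 'I_n * 'I_n) (Plo Phi PD : 'I_n -> R)
  (F : 'I_m -> set (R * R)) : set (('I_n -> R) * ('I_m -> R * R)) :=
  [set z | (forall i, Plo i <= z.1 i <= Phi i) /\
           (forall i, z.1 i - PD i = net_flow ends z.2 i) /\
           (forall j, F j (z.2 j))].

Definition cost n m (f : 'I_n -> R -> R) (z : ('I_n -> R) * ('I_m -> R * R)) : R :=
  \sum_(i < n) f i (z.1 i).

Definition is_inf (A : set R) (v : R) : Prop :=
  (forall a, A a -> v <= a) /\ (forall e, 0 < e -> exists a, A a /\ a < v + e).

Definition opt_value T (S : set T) (obj : T -> R) (v : R) : Prop :=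
  is_inf [set y | exists z, S z /\ y = obj z] v.

Definition lagrangian n m (ends : 'I_m -> 'I_n * 'I_n) (f : 'I_n -> R -> R)
  (PD mu : 'I_n -> R) (z : ('I_n -> R) * ('I_m -> R * R)) : R :=
  cost f z + \sum_(i < n) mu i * (PD i + net_flow ends z.2 i - z.1 i).

(* mu is a (dual-optimal) Lagrange multiplier vector of the balance equations *)
Definition is_balance_multiplier n m (ends : 'I_m -> 'I_n * 'I_n)
  (Plo Phi PD : 'I_n -> R) (F : 'I_m -> set (R * R)) (f : 'I_n -> R -> R)
  (mu : 'I_n -> R) : Prop :=
  exists v, opt_value (opf_feasible ends Plo Phi PD F) (cost f) v /\
    is_inf [set y | exists z : ('I_n -> R) * ('I_m -> R * R),
              (forall i, Plo i <= z.1 i <= Phi i) /\ (forall j, F j (z.2 j)) /\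
              y = lagrangian ends f PD mu z] v.

(* lam is the gradient at eps = 0 of the optimal value f*_eps
   (Frechet differentiability, max norm on R^n) *)
Definition is_lmp n m (ends : 'I_m -> 'I_n * 'I_n)
  (Plo Phi PD : 'I_n -> R) (F : 'I_m -> set (R * R)) (f : 'I_n -> R -> R)
  (lam : 'I_n -> R) : Prop :=
  exists f0, opt_value (opf_feasible ends Plo Phi PD F) (cost f) f0 /\
  forall e, 0 < e -> exists d, 0 < d /\
    forall eps : 'I_n -> R, (forall i, `|eps i| < d) ->
      exists v, opt_value (opf_feasible ends Plo Phi (fun i => PD i + eps i) F)
                          (cost f) v /\
        `|v - f0 - \sum_(i < n) lam i * eps i| <= e * \big[Num.max/0]_(i < n) `|eps i|.

Definition adj n m (ends : 'I_m -> 'I_n * 'I_n) : rel 'I_n :=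
  fun i k => [exists j, (ends j == (i, k)) || (ends j == (k, i))].

Definition is_tree n m (ends : 'I_m -> 'I_n * 'I_n) : Prop :=
  (m.+1 = n)%N /\ (forall i k : 'I_n, connect (adj ends) i k).

End Defs.

(* Under the angle limits P_ik increases and P_ki decreases with theta_ik, and
   F_theta is an arc of an ellipse whose supporting lines have nonnegative
   normals, so every point of conv(F_theta) dominates a point of F_theta.
   Peeling leaves off the tree, the flows of any point of the convexified problem
   can therefore be lowered edge by edge until the balance equations hold exactly,
   without raising any generation.  Hence both problems have the same optimal
   value for every load, and this value is convex along segments towards
   convexified points.  The gradient lambda of the value function is then a
   subgradient, which is the statement that it is a Lagrange multiplier of the
   balance equations; any multiplier is a subgradient, hence equals lambda; and
   lambda >= 0 because lowering a load never raises the optimal cost. *)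

From mathcomp Require Import all_boot all_order all_algebra.
From mathcomp Require Import all_classical all_reals all_analysis.
From mathcomp Require Import ring lra zify.
Import Order.TTheory GRing.Theory Num.Theory numFieldNormedType.Exports.
Local Open Scope ring_scope.
Set Implicit Arguments.
Unset Strict Implicit.
Unset Printing Implicit Defensive.

Section LineFlow.
Variable R : realType.
Implicit Types Vi Vk g b lo hi s t th : R.

Lemma flow_normal_pos g b lo hi th : 0 <= g -> 0 <= b ->
  - arctan_ratio b g < lo -> hi < arctan_ratio b g -> lo <= th <= hi ->
  (g = 0 /\ b = 0) \/ `|g * sin th| < b * cos th.
Proof.
move=> g0 b0 hlo hhi /andP[th_lo th_hi]; rewrite /arctan_ratio in hlo hhi.
have pi2 : 0 < pi / 2 :> R by rewrite divr_gt0 // pi_gt0.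
case: eqP hlo hhi => [-> | /eqP gnz] hlo hhi.
  have [-> | bnz] := eqVneq b 0; [by left | right].
  have cth : 0 < cos th.
    apply: cos_gt0_pihalf; apply/andP; split.
      exact: lt_le_trans hlo th_lo.
    exact: le_lt_trans th_hi hhi.
  by rewrite mul0r normr0 mulr_gt0 // lt_neqAle eq_sym bnz.
right; have gp : 0 < g by rewrite lt_neqAle eq_sym gnz g0.
set al := atan (b / g) in hlo hhi.
have al_lt : al < pi / 2 by apply: atan_ltpi2.
have al_ge0 : 0 <= al by rewrite /al -(@atan0 R) le_atan // divr_ge0.
have in_pi2 x : - al < x -> x < al -> x \in `](- (pi / 2)), (pi / 2)[.
  by move=> x1 x2; rewrite in_itv /=; apply/andP; split; lra.
have al_pi2 : al \in `](- (pi / 2)), (pi / 2)[.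
  by rewrite in_itv /=; apply/andP; split; lra.
have cth : 0 < cos th by apply: cos_gt0_pihalf; apply/andP; split; lra.
have tan_lt x : - al < x -> x < al -> tan x < b / g.
  move=> x1 x2; rewrite -[X in _ < X](@atanK R) -/al.
  by rewrite ltr_tan // in_pi2.
have t1 : tan th < b / g by apply: tan_lt; lra.
have t2 : tan (- th) < b / g by apply: tan_lt; lra.
have hs : sin th = tan th * cos th by rewrite /tan divfK // gt_eqF.
have hs' : - sin th = tan (- th) * cos th by rewrite /tan sinN cosN divfK // gt_eqF.
have hb : b = b / g * g by rewrite divfK // gt_eqF.
set T1 := tan th in t1 hs; set T2 := tan (- th) in t2 hs'; set B := b / g in t1 t2 hb.
have gc : 0 < g * cos th by apply: mulr_gt0.
have d1 : 0 < (B - T1) * (g * cos th) by rewrite mulr_gt0 // subr_gt0.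
have d2 : 0 < (B - T2) * (g * cos th) by rewrite mulr_gt0 // subr_gt0.
rewrite ltr_norml; apply/andP; split; rewrite hb; nra.
Qed.

Lemma line_flow_monotone Vi Vk g b lo hi t t' : 0 <= Vi -> 0 <= Vk ->
  - pi <= lo -> hi <= pi ->
  (forall th, lo <= th <= hi -> `|g * sin th| <= b * cos th) ->
  lo <= t -> t <= t' -> t' <= hi ->
  line_Pik Vi Vk g b t <= line_Pik Vi Vk g b t' /\
  line_Pki Vi Vk g b t' <= line_Pki Vi Vk g b t.
Proof.
move=> Vi0 Vk0 pi_lo hi_pi normal lo_t tt' t'_hi.
set c := (t + t') / 2; set d := (t' - t) / 2.
have -> : t' = c + d by rewrite /c /d; field.
have -> : t = c + - d by rewrite /c /d; field.
have sd : 0 <= sin d by apply: sin_ge0_pi; apply/andP; split; rewrite /d; lra.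
have : `|g * sin c| <= b * cos c.
  by apply: normal; apply/andP; split; rewrite /c; lra.
rewrite ler_norml => /andP[n1 n2].
have VV : 0 <= 2 * (Vi * Vk) * sin d by rewrite !mulr_ge0.
rewrite /line_Pik /line_Pki !sinD !cosD sinN cosN; split; rewrite -subr_ge0.
- have -> : Vi ^+ 2 * g + Vi * Vk * b * (sin c * cos d + cos c * sin d) -
     Vi * Vk * g * (cos c * cos d - sin c * sin d) -
     (Vi ^+ 2 * g + Vi * Vk * b * (sin c * cos d + cos c * - sin d) -
      Vi * Vk * g * (cos c * cos d - sin c * - sin d))
    = 2 * (Vi * Vk) * sin d * (g * sin c + b * cos c) by ring.
  by rewrite mulr_ge0 //; lra.
- have -> : Vk ^+ 2 * g - Vi * Vk * b * (sin c * cos d + cos c * - sin d) -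
     Vi * Vk * g * (cos c * cos d - sin c * - sin d) -
     (Vk ^+ 2 * g - Vi * Vk * b * (sin c * cos d + cos c * sin d) -
      Vi * Vk * g * (cos c * cos d - sin c * sin d))
    = 2 * (Vi * Vk) * sin d * (b * cos c - g * sin c) by ring.
  by rewrite mulr_ge0 //; lra.
Qed.

Lemma line_Pik_continuous Vi Vk g b : continuous (line_Pik Vi Vk g b).
Proof.
move=> x; apply: cvgB; first apply: cvgD; first exact: cvg_cst.
- by apply: cvgM; [exact: cvg_cst | exact: continuous_sin].
- by apply: cvgM; [exact: cvg_cst | exact: continuous_cos].
Qed.

Lemma line_Pki_continuous Vi Vk g b : continuous (line_Pki Vi Vk g b).
Proof.
move=> x; apply: cvgB; first apply: cvgB; first exact: cvg_cst.
- by apply: cvgM; [exact: cvg_cst | exact: continuous_sin].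
- by apply: cvgM; [exact: cvg_cst | exact: continuous_cos].
Qed.

(* The flow curve is an arc of an ellipse; this is its supporting line at [s]. *)
Lemma line_flow_support Vi Vk g b t s : 0 <= Vi * Vk * b * g ->
  0 <= (g * sin s + b * cos s) * (line_Pki Vi Vk g b t - line_Pki Vi Vk g b s)
     + (b * cos s - g * sin s) * (line_Pik Vi Vk g b t - line_Pik Vi Vk g b s).
Proof.
move=> VVbg; rewrite /line_Pik /line_Pki.
have e1 : sin s ^+ 2 + cos s ^+ 2 = 1 by rewrite sin2cos2 subrK.
have e2 : sin t ^+ 2 + cos t ^+ 2 = 1 by rewrite sin2cos2 subrK.
have -> : (g * sin s + b * cos s) *
  (Vk ^+ 2 * g - Vi * Vk * b * sin t - Vi * Vk * g * cos t -
   (Vk ^+ 2 * g - Vi * Vk * b * sin s - Vi * Vk * g * cos s)) +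
  (b * cos s - g * sin s) *
  (Vi ^+ 2 * g + Vi * Vk * b * sin t - Vi * Vk * g * cos t -
   (Vi ^+ 2 * g + Vi * Vk * b * sin s - Vi * Vk * g * cos s))
  = Vi * Vk * b * g * ((sin t - sin s) ^+ 2 + (cos t - cos s) ^+ 2)
  + Vi * Vk * b * g * ((sin s ^+ 2 + cos s ^+ 2) - (sin t ^+ 2 + cos t ^+ 2)) by ring.
by rewrite e1 e2 subrr mulr0 addr0 mulr_ge0 // addr_ge0 // sqr_ge0.
Qed.
End LineFlow.

Section Hull.
Variable R : realType.
Local Open Scope classical_set_scope.

Lemma continuous_ivt_minmax (f : R -> R) a b v : continuous f ->
  Num.min (f a) (f b) <= v <= Num.max (f a) (f b) ->
  exists c, Num.min a b <= c <= Num.max a b /\ f c = v.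
Proof.
move=> cf.
wlog ab : a b / a <= b => [hw|].
  case/orP: (le_total a b) => [ab|ba]; first exact: hw.
  rewrite minC maxC => hv; have [c [hc fc]] := hw b a ba hv.
  by exists c; rewrite minC maxC.
move=> hv; have cfab : {within `[a, b], continuous f}.
  by apply: continuous_subspaceT => x; exact: cf.
by have [c cab fc] := IVT ab cfab hv; exists c; rewrite (min_idPl ab) (max_idPr ab).
Qed.

Lemma convex_sum_affine k (w x y : 'I_k -> R) al be ga :
  \sum_(j < k) w j = 1 ->
  \sum_(j < k) w j * (al * x j + be * y j + ga) =
  al * \sum_(j < k) w j * x j + be * \sum_(j < k) w j * y j + ga.
Proof.
move=> w1; rewrite -[ga]mul1r -[in RHS]w1 !mulr_sumr mulr_suml -!big_split /=.
by apply: eq_bigr => j _; ring.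
Qed.

Lemma convex_sum_between k (w x : 'I_k -> R) lo hi :
  (forall j, 0 <= w j) -> \sum_(j < k) w j = 1 -> (forall j, lo <= x j <= hi) ->
  lo <= \sum_(j < k) w j * x j <= hi.
Proof.
move=> w0 w1 hx; have cst c : \sum_(j < k) w j * c = c by rewrite -mulr_suml w1 mul1r.
by apply/andP; split; [rewrite -{1}(cst lo) | rewrite -(cst hi)];
  apply: ler_sum => j _; apply: ler_wpM2l => //; case/andP: (hx j).
Qed.

(* An angle matching the first coordinate exists by the IVT; averaging the
   supporting line at that angle bounds the second coordinate. *)
Lemma flow_hull_dominated Vi Vk g b lo hi (p : R * R) :
  0 <= Vi -> 0 <= Vk -> 0 <= g -> 0 <= b ->
  (forall th, lo <= th <= hi -> (g = 0 /\ b = 0) \/ `|g * sin th| < b * cos th) ->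
  convex_hull (flow_region Vi Vk g b lo hi) p ->
  exists th, lo <= th <= hi /\
    line_Pik Vi Vk g b th <= p.1 /\ line_Pki Vi Vk g b th <= p.2.
Proof.
move=> Vi0 Vk0 g0 b0 normal [k [wt [q [w0 [w1 [qF ->]]]]]] /=.
have [th thP] := choice qF.
set u := line_Pik Vi Vk g b; set w := line_Pki Vi Vk g b.
have thI j : lo <= th j <= hi by case: (thP j).
have p1E : \sum_(j < k) wt j * (q j).1 = \sum_(j < k) wt j * u (th j).
  by apply: eq_bigr => j _; case: (thP j) => _ ->.
have p2E : \sum_(j < k) wt j * (q j).2 = \sum_(j < k) wt j * w (th j).
  by apply: eq_bigr => j _; case: (thP j) => _ ->.
rewrite p1E p2E; set p1 := \sum_(j < k) _; set p2 := \sum_(j < k) _.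
have k_gt0 : (0 < k)%N.
  case: (posnP k) => [k0|//]; subst k.
  by move: w1; rewrite big_ord0 => /eqP; rewrite eq_sym oner_eq0.
pose j0 := Ordinal k_gt0.
have [jm _ hm] := @arg_minP _ R 'I_k j0 xpredT (fun j => u (th j)) isT.
have [jM _ hM] := @arg_maxP _ R 'I_k j0 xpredT (fun j => u (th j)) isT.
have /andP[p1_lo p1_hi] : u (th jm) <= p1 <= u (th jM).
  by apply: convex_sum_between => // j; apply/andP; split; [exact: hm | exact: hM].
have [ts [tsI tsE]] : exists ts, Num.min (th jm) (th jM) <= ts <= Num.max (th jm) (th jM)
    /\ u ts = p1.
  apply: continuous_ivt_minmax; first exact: line_Pik_continuous.
  by rewrite ge_min p1_lo le_max p1_hi orbT.
have tsI' : lo <= ts <= hi.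
  case/andP: tsI (thI jm) (thI jM) => t1 t2 /andP[a1 a2] /andP[b1 b2].
  apply/andP; split; first by apply: le_trans t1; rewrite le_min a1 b1.
  by apply: le_trans t2 _; rewrite ge_max a2 b2.
exists ts; split=> //; split; first by rewrite tsE.
have [[g0' b0'] | ] := normal ts tsI'.
  have w_cst t : w t = w ts by rewrite /w /line_Pki g0' b0'; ring.
  by rewrite /p2; under eq_bigr do rewrite w_cst; rewrite -mulr_suml w1 mul1r.
rewrite ltr_norml => /andP[n1 n2].
set D := g * sin ts + b * cos ts; set N := b * cos ts - g * sin ts.
have Dp : 0 < D by rewrite /D; lra.
have : 0 <= \sum_(j < k) wt j * (D * w (th j) + N * u (th j) + - (D * w ts + N * u ts)).
  apply: sumr_ge0 => j _; rewrite mulr_ge0 //.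
  have VVbg : 0 <= Vi * Vk * b * g by rewrite !mulr_ge0.
  by have := line_flow_support (th j) ts VVbg; rewrite -/u -/w -/D -/N; lra.
rewrite convex_sum_affine // -/p1 -/p2 tsE.
have -> : D * p2 + N * p1 + - (D * w ts + N * p1) = D * (p2 - w ts) by ring.
by rewrite pmulr_rge0 // subr_ge0.
Qed.

Lemma convex_hull_sub (A : set (R * R)) p : A p -> convex_hull A p.
Proof.
move=> Ap; exists 1%N, (fun _ => 1), (fun _ => p).
by rewrite !big_ord1 !mul1r; case: p Ap.
Qed.

Lemma convex_hull_comb (A : set (R * R)) p q t : 0 <= t <= 1 ->
  convex_hull A p -> A q ->
  convex_hull A (t * p.1 + (1 - t) * q.1, t * p.2 + (1 - t) * q.2).
Proof.
move=> /andP[t0 t1] [k [wt [qq [w0 [w1 [qA ->]]]]]] Aq /=.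
exists k.+1, (fun j => if unlift ord0 j is Some j' then t * wt j' else 1 - t),
  (fun j => if unlift ord0 j is Some j' then qq j' else q).
split; first by move=> j; case: (unlift ord0 j) => [j'|]; rewrite ?mulr_ge0 ?subr_ge0.
split.
  rewrite big_ord_recl unlift_none.
  under eq_bigr do rewrite liftK.
  by rewrite -mulr_sumr w1; ring.
split; first by move=> j; case: (unlift ord0 j).
rewrite !big_ord_recl unlift_none !mulr_sumr.
by congr (_, _); rewrite addrC; congr (_ + _); apply: eq_bigr => j _; rewrite liftK; ring.
Qed.
End Hull.

Section Countermonotone.
Variable R : realType.
Implicit Types lo hi t : R.

Definition countermonotone lo hi (phi psi : R -> R) :=
  (forall t t', lo <= t -> t <= t' -> t' <= hi -> phi t <= phi t' /\ psi t' <= psi t) \/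
  (forall t t', lo <= t -> t <= t' -> t' <= hi -> phi t' <= phi t /\ psi t <= psi t').

Variables (lo hi : R) (phi psi : R -> R).
Hypothesis cm : countermonotone lo hi phi psi.

Lemma countermonotone_lt s s' : lo <= s <= hi -> lo <= s' <= hi ->
  phi s < phi s' -> psi s' <= psi s.
Proof.
move=> /andP[s1 s2] /andP[s1' s2']; rewrite ltNge.
case: cm => cm'; have [ss'|s's] := leP s s'.
- by have [_ ->] := cm' _ _ s1 ss' s2'.
- by have [-> _] := cm' _ _ s1' (ltW s's) s2.
- by have [-> _] := cm' _ _ s1 ss' s2'.
- by have [_ ->] := cm' _ _ s1' (ltW s's) s2.
Qed.

Lemma countermonotone_between tA tB t : lo <= tA <= hi -> lo <= tB <= hi ->
  Num.min tA tB <= t <= Num.max tA tB ->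
  Num.min (phi tA) (phi tB) <= phi t <= Num.max (phi tA) (phi tB).
Proof.
wlog AB : tA tB / tA <= tB => [hw|].
  case/orP: (le_total tA tB) => [AB|BA]; first exact: hw.
  move=> hA hB; have := hw tB tA BA hB hA.
  by rewrite [Num.min tB _]minC [Num.max tB _]maxC [Num.min (phi tB) _]minC [Num.max (phi tB) _]maxC.
rewrite (min_idPl AB) (max_idPr AB) => /andP[a1 a2] /andP[b1 b2] /andP[t1 t2].
rewrite ge_min le_max.
by case: cm => cm'; have [h1 _] := cm' _ _ a1 t1 (le_trans t2 b2);
  have [h2 _] := cm' _ _ (le_trans a1 t1) t2 b2; rewrite h1 h2 ?orbT.
Qed.

Hypotheses (cphi : continuous phi) (cpsi : continuous psi).

Lemma countermonotone_window al bl t0 t1 :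
  lo <= t0 <= hi -> lo <= t1 <= hi -> al <= bl -> al <= phi t0 -> phi t1 <= bl ->
  exists tA tB, [/\ lo <= tA <= hi, al <= phi tA <= bl & psi t0 <= psi tA] /\
                [/\ lo <= tB <= hi, al <= phi tB <= bl & psi tB <= psi t1].
Proof.
move=> h0 h1 ab p0 p1.
have [tm [tmI tmP]] : exists tm, lo <= tm <= hi /\ al <= phi tm <= bl.
  have [q1|q1] := leP al (phi t1); first by exists t1; rewrite q1 p1.
  have [q0|q0] := leP (phi t0) bl; first by exists t0; rewrite q0 p0.
  have [|t [tI tE]] := continuous_ivt_minmax (a := t0) (b := t1) (v := al) cphi.
    by rewrite ge_min (ltW q1) orbT le_max (le_trans ab (ltW q0)).
  exists t; rewrite tE lexx ab; split=> //.
  case/andP: tI h0 h1 => t1' t2 /andP[a1 a2] /andP[b1 b2]; apply/andP; split.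
    by apply: le_trans t1'; rewrite le_min a1 b1.
  by apply: le_trans t2 _; rewrite ge_max a2 b2.
case/andP: tmP => tm1 tm2.
have [tA hA] : exists tA, [/\ lo <= tA <= hi, al <= phi tA <= bl & psi t0 <= psi tA].
  have [q0|q0] := leP (phi t0) bl; first by exists t0; rewrite q0 p0 lexx.
  exists tm; rewrite tm1 tm2; split=> //.
  exact: countermonotone_lt tmI h0 (le_lt_trans tm2 q0).
have [tB hB] : exists tB, [/\ lo <= tB <= hi, al <= phi tB <= bl & psi tB <= psi t1].
  have [q1|q1] := leP al (phi t1); first by exists t1; rewrite q1 p1 lexx.
  exists tm; rewrite tm1 tm2; split=> //.
  exact: countermonotone_lt h1 tmI (lt_le_trans q1 tm1).
by exists tA, tB.
Qed.

Lemma countermonotone_meet al bl c d tA tB :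
  lo <= tA <= hi -> lo <= tB <= hi -> al <= phi tA <= bl -> al <= phi tB <= bl ->
  c <= d -> c <= Num.max (psi tA) (psi tB) -> Num.min (psi tA) (psi tB) <= d ->
  exists t, lo <= t <= hi /\ al <= phi t <= bl /\ c <= psi t <= d.
Proof.
move=> hA hB pA pB cd c_max min_d.
have end_ok s : s = tA \/ s = tB -> c <= psi s <= d -> exists t,
    lo <= t <= hi /\ al <= phi t <= bl /\ c <= psi t <= d.
  by case=> ->; [exists tA | exists tB].
have [c_min|min_c] := leP c (Num.min (psi tA) (psi tB)).
  move: c_min min_d; rewrite /Num.min; case: ifP => _ c1 c2.
    by apply: (end_ok tA); [left | rewrite c1 c2].
  by apply: (end_ok tB); [right | rewrite c1 c2].
have [max_d|d_max] := leP (Num.max (psi tA) (psi tB)) d.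
  move: c_max max_d; rewrite /Num.max; case: ifP => _ c1 c2.
    by apply: (end_ok tB); [right | rewrite c1 c2].
  by apply: (end_ok tA); [left | rewrite c1 c2].
have [|t [tI tE]] := continuous_ivt_minmax (a := tA) (b := tB) (v := c) cpsi; first by rewrite (ltW min_c).
have tbox : lo <= t <= hi.
  case/andP: tI hA hB => t1 t2 /andP[a1 a2] /andP[b1 b2]; apply/andP; split.
    by apply: le_trans t1; rewrite le_min a1 b1.
  by apply: le_trans t2 _; rewrite ge_max a2 b2.
exists t; split=> //; split; last by rewrite tE lexx cd.
have /andP[m1 m2] := countermonotone_between hA hB tI.
case/andP: pA pB => a1 a2 /andP[b1 b2]; apply/andP; split.
  by apply: le_trans m1; rewrite le_min a1 b1.
by apply: le_trans m2 _; rewrite ge_max a2 b2.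
Qed.
End Countermonotone.

Section TreeLeaf.
Variables (n m : nat) (ends : 'I_m -> 'I_n * 'I_n) (r : 'I_n).
Hypothesis conn : forall v, connect (adj ends) r v.

Fixpoint ball (k : nat) : {set 'I_n} :=
  if k is k'.+1 then ball k' :|: [set y | [exists x in ball k', adj ends x y]]
  else [set r].

Lemma ball_mono k k' : (k <= k')%N -> ball k \subset ball k'.
Proof.
elim: k' => [|k' IH]; first by rewrite leqn0 => /eqP ->.
rewrite leq_eqVlt ltnS => /orP[/eqP -> // | kk'].
exact: fintype.subset_trans (IH kk') (finset.subsetUl _ _).
Qed.

Lemma ball_adj k x y : x \in ball k -> adj ends x y -> y \in ball k.+1.
Proof. by move=> xk xy; rewrite /= !inE; apply/orP; right; apply/existsP; exists x; rewrite xk. Qed.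

Lemma ball_path p k x : x \in ball k -> path (adj ends) x p -> last x p \in ball (k + size p).
Proof.
elim: p k x => [|y p IH] k x xk /=; first by rewrite addn0.
by case/andP=> xy yp; rewrite addnS -addSn; apply: IH yp; exact: ball_adj xk xy.
Qed.

Lemma ball_exhaustive v : exists k, v \in ball k.
Proof.
have /connectP[p rp ->] := conn v; exists (0 + size p)%N.
by apply: ball_path; rewrite //= inE.
Qed.

Definition depth v := ex_minn (ball_exhaustive v).

Lemma depth_ball v : v \in ball (depth v).
Proof. by rewrite /depth; case: ex_minnP. Qed.

Lemma depth_min v k : v \in ball k -> (depth v <= k)%N.
Proof. by rewrite /depth; case: ex_minnP => d _ h /h. Qed.

Lemma depth_parent v : v != r -> exists2 x, adj ends x v & (depth x).+1 = depth v.
Proof.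
move=> vr; have := depth_ball v.
case E : (depth v) => [|k] /=; first by rewrite inE (negPf vr).
rewrite inE => /orP[vk | ]; first by have := depth_min vk; rewrite E ltnn.
rewrite inE => /existsP[x /andP[xk xv]]; exists x => //.
apply/eqP; rewrite eqSS eqn_leq depth_min //=; rewrite leqNgt; apply/negP => lt.
have : v \in ball k by apply: fintype.subsetP (ball_mono lt) _ (ball_adj (depth_ball x) xv).
by move/depth_min; rewrite E ltnn.
Qed.

Definition parent_edge_of v j :=
  exists x, (depth x).+1 = depth v /\ (ends j = (x, v) \/ ends j = (v, x)).

Lemma parent_edge_of_inj v v' j : parent_edge_of v j -> parent_edge_of v' j -> v = v'.
Proof.
move=> [x [dx ex]] [x' [dx' ex']]; apply/eqP/negP => /negP vv'.
case: ex ex' => -> [] [x1 x2]; subst; rewrite ?eqxx // in vv';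
  by move: dx dx'; lia.
Qed.

Hypothesis card_edges : m.+1 = n.

(* On a tree the parent-edge map from non-root vertices to edges is a bijection;
   [j0] is only its junk value at the root. *)
Lemma parent_edge_map (j0 : 'I_m) : exists pe : 'I_n -> 'I_m,
  (forall v, v != r -> parent_edge_of v (pe v)) /\ forall j, exists2 v, v != r & pe v = j.
Proof.
have hpe v : exists j, v != r -> parent_edge_of v j.
  have [-> | vr] := eqVneq v r; first by exists j0.
  have [x /existsP[e xe] dx] := depth_parent vr; exists e => _; exists x.
  by split=> //; case/orP: xe => /eqP ->; [left | right].
have [pe peP] := choice hpe; exists pe; split=> // j.
have pe_inj : {in [set~ r] &, injective pe}.
  move=> v v'; rewrite !inE => vr v'r e.
  by apply: parent_edge_of_inj (peP v vr) _; rewrite e; exact: peP.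
have : j \in pe @: [set~ r].
  suff -> : pe @: [set~ r] = [set: 'I_m] by rewrite inE.
  apply/eqP; rewrite eqEcard finset.subsetT cardsT card_in_imset // cardsC1.
  by rewrite /= !fintype.card_ord; lia.
by case/imsetP=> v; rewrite !inE => vr ->; exists v.
Qed.

(* The edge of [S] whose child is deepest ends in a leaf of [S]. *)
Lemma tree_edge_set_leaf (S : {set 'I_m}) : S != finset.set0 ->
  exists l e, [/\ e \in S,
    exists2 x, x != l & (ends e = (l, x) \/ ends e = (x, l)) &
    forall j, j \in S -> j != e -> (ends j).1 != l /\ (ends j).2 != l].
Proof.
case/finset.set0Pn=> e0 e0S.
have [pe [peP pe_onto]] := parent_edge_map e0.
have child j : exists v, v != r /\ pe v = j.
  by have [v vr vj] := pe_onto j; exists v.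
have [ch chP] := choice child.
have [e eS emax] := @arg_maxnP _ e0 (mem S) (fun j => depth (ch j)) e0S.
have [cer pce] := chP e; have [x [dx ex]] := peP _ cer; rewrite pce in ex.
exists (ch e), e; split=> //.
  exists x; last by case: ex; [right | left].
  by apply/eqP => xe; move: dx; rewrite xe; lia.
move=> j jS je; have [cjr pcj] := chP j.
have [y [dy ey]] := peP _ cjr; rewrite pcj in ey.
have := emax j jS; rewrite /= => dj.
have ye : y != ch e.
  apply/eqP => ye; move: dj dy; rewrite ye; lia.
have chj : ch j != ch e by apply: contraNneq je => chje; rewrite -pcj chje pce.
by case: ey => ->; split.
Qed.
End TreeLeaf.

Section TreeFlow.
Variable R : realType.
Variables (n m : nat) (ends : 'I_m -> 'I_n * 'I_n).
Variables (lo hi : 'I_m -> R) (u w : 'I_m -> R -> R).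
Implicit Types (S : {set 'I_m}) (e j : 'I_m) (th : 'I_m -> R) (i l x : 'I_n).

Definition edge_term (th : 'I_m -> R) (i : 'I_n) (j : 'I_m) : R :=
  (if (ends j).1 == i then u j (th j) else 0) + (if (ends j).2 == i then w j (th j) else 0).

Definition partial_net_flow (S : {set 'I_m}) th i := \sum_(j in S) edge_term th i j.

Definition in_box (th : 'I_m -> R) := forall j, lo j <= th j <= hi j.

Definition leaf_side e l := if (ends e).1 == l then u e else w e.
Definition far_side e l := if (ends e).1 == l then w e else u e.

Lemma partial_net_flow0 th i : partial_net_flow finset.set0 th i = 0.
Proof. by rewrite /partial_net_flow big_set0. Qed.

Lemma partial_net_flowD1 S e th i : e \in S ->
  partial_net_flow S th i = edge_term th i e + partial_net_flow (S :\ e) th i.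
Proof. by move=> eS; rewrite /partial_net_flow (big_setD1 e eS). Qed.

Lemma partial_net_flow_set S e th t i : e \notin S ->
  partial_net_flow S (fun j => if j == e then t else th j) i = partial_net_flow S th i.
Proof.
move=> eS; apply: eq_bigr => j jS; rewrite /edge_term /=.
by have -> : (j == e) = false by apply: contraNF eS => /eqP <-.
Qed.

Lemma edge_term_leaf th e l x i : x != l -> ends e = (l, x) \/ ends e = (x, l) ->
  edge_term th i e =
  if i == l then leaf_side e l (th e) else if i == x then far_side e l (th e) else 0.
Proof.
move=> xl el; rewrite /edge_term /leaf_side /far_side.
have lx : (l == x) = false by apply/negbTE; rewrite eq_sym.
by case: (eqVneq i l) => [->|il]; [|case: (eqVneq i x) => [->|ix]]; case: el => -> /=;
  rewrite ?eqxx ?lx ?(negbTE xl) ?(eq_sym l i) ?(eq_sym x i) ?(negbTE il) ?(negbTE ix)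
    ?addr0 ?add0r.
Qed.

Lemma partial_net_flowT th i :
  partial_net_flow [set: 'I_m] th i =
  net_flow ends (fun j => (u j (th j), w j (th j))) i.
Proof.
rewrite [RHS]/net_flow big_mkcond [X in _ + X]big_mkcond -big_split /=.
by apply: eq_bigl => j; rewrite finset.in_setT.
Qed.

Hypothesis mono : forall j t t', lo j <= t -> t <= t' -> t' <= hi j ->
  u j t <= u j t' /\ w j t' <= w j t.

Lemma leaf_side_countermonotone e l :
  countermonotone (lo e) (hi e) (leaf_side e l) (far_side e l).
Proof.
rewrite /countermonotone /leaf_side /far_side; case: ifP => _; [left | right];
  by move=> t t' h1 h2 h3; have [] := mono h1 h2 h3.
Qed.

Hypotheses (cu : forall j, continuous (u j)) (cw : forall j, continuous (w j)).
Hypothesis leaf : forall S : {set 'I_m}, S != finset.set0 ->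
  exists l e, [/\ e \in S,
    exists2 x, x != l & (ends e = (l, x) \/ ends e = (x, l)) &
    forall j, j \in S -> j != e -> (ends j).1 != l /\ (ends j).2 != l].

(* Induction on [S]: the flow on a leaf edge [e] is fixed first so that the leaf
   bus [l] is balanced, and the window left for the far bus [x] is passed on to
   the remaining edges. *)
Theorem tree_flow_sandwich (S : {set 'I_m}) (a b : 'I_n -> R) :
  (forall i, a i <= b i) ->
  (exists th0, in_box th0 /\ forall i, a i <= partial_net_flow S th0 i) ->
  (exists th1, in_box th1 /\ forall i, partial_net_flow S th1 i <= b i) ->
  exists th, in_box th /\ forall i, a i <= partial_net_flow S th i <= b i.
Proof.
have [k] := ubnP #|S|; elim: k S a b => // k IH S a b.
rewrite ltnS => Sk ab [th0 [box0 h0]] [th1 [box1 h1]].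
have [S0|Sn0] := eqVneq S finset.set0.
  by exists th0; split=> // i; rewrite h0 /=; move: (h1 i); rewrite S0 !partial_net_flow0.
have [l [e [eS [x xl el] other]]] := leaf Sn0.
set S' := S :\ e; set phi := leaf_side e l; set psi := far_side e l.
have eS' : e \notin S' by rewrite !inE eqxx.
have S'k : (#|S'| < k)%N by move: Sk; rewrite (cardsD1 e S) eS.
have S'l th : partial_net_flow S' th l = 0.
  rewrite /partial_net_flow big1 // => j; rewrite !inE => /andP[je jS].
  by rewrite /edge_term; have [/negbTE -> /negbTE ->] := other j jS je; rewrite addr0.
have flowE th i : partial_net_flow S th i =
    (if i == l then phi (th e) else if i == x then psi (th e) else 0) +
    partial_net_flow S' th i.
  by rewrite (partial_net_flowD1 _ _ eS) (edge_term_leaf _ _ xl el).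
have xl' : (x == l) = false by apply/negbTE.
have cm := leaf_side_countermonotone e l.
have cphi : continuous phi by rewrite /phi /leaf_side; case: ifP.
have cpsi : continuous psi by rewrite /psi /far_side; case: ifP.
have p0 : a l <= phi (th0 e) by have := h0 l; rewrite flowE eqxx S'l addr0.
have p1 : phi (th1 e) <= b l by have := h1 l; rewrite flowE eqxx S'l addr0.
have [tA [tB [[hA1 hA2 hA3] [hB1 hB2 hB3]]]] :=
  countermonotone_window cm cphi (box0 e) (box1 e) (ab l) p0 p1.
set hiv := Num.max (psi tA) (psi tB); set lov := Num.min (psi tA) (psi tB).
pose a' i := if i == l then 0 else if i == x then a x - hiv else a i.
pose b' i := if i == l then 0 else if i == x then b x - lov else b i.
have [th' [box' h']] : exists th, in_box th /\ forall i, a' i <= partial_net_flow S' th i <= b' i.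
  apply: IH => //.
  - move=> i; rewrite /a' /b'; case: ifP => // _; case: ifP => // _.
    by apply: lerB => //; rewrite ge_min !le_max !lexx.
  - exists th0; split=> // i; rewrite /a'.
    case: (eqVneq i l) => [->|il]; first by rewrite S'l.
    have := h0 i; rewrite flowE (negbTE il); case: (eqVneq i x) => [-> | _]; last by rewrite add0r.
    have : psi (th0 e) <= hiv by rewrite /hiv le_max hA3.
    lra.
  - exists th1; split=> // i; rewrite /b'.
    case: (eqVneq i l) => [->|il]; first by rewrite S'l.
    have := h1 i; rewrite flowE (negbTE il); case: (eqVneq i x) => [-> | _]; last by rewrite add0r.
    have : lov <= psi (th1 e) by rewrite /lov ge_min hB3 orbT.
    lra.
set rx := partial_net_flow S' th' x.
have := h' x; rewrite /a' /b' xl' eqxx -/rx => /andP[hx1 hx2].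
have [t [tI [tphi tpsi]]] : exists t, lo e <= t <= hi e /\ a l <= phi t <= b l /\
    a x - rx <= psi t <= b x - rx.
  by apply: (countermonotone_meet cm cpsi hA1 hB1 hA2 hB2); move: (ab x); rewrite -/hiv -/lov; lra.
exists (fun j => if j == e then t else th' j); split.
  by move=> j; case: eqP => [->|_]; [exact: tI | exact: box'].
move=> i; rewrite flowE partial_net_flow_set // eqxx.
case: (eqVneq i l) => [->|il]; first by rewrite S'l addr0.
case: (eqVneq i x) => [->|ix]; first by rewrite -/rx; move: tpsi; lra.
by rewrite add0r; have := h' i; rewrite /a' /b' (negbTE il) (negbTE ix).
Qed.
End TreeFlow.

Section OptValue.
Variable R : realType.
Local Open Scope classical_set_scope.

Lemma is_inf_unique (A : set R) v v' : is_inf A v -> is_inf A v' -> v = v'.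
Proof.
move=> [lb1 ap1] [lb2 ap2]; apply/eqP; rewrite eq_le; apply/andP; split.
- by apply/ler_addgt0Pr => e e0; have [a [Aa lt]] := ap2 e e0; rewrite (le_trans (lb1 _ Aa)) ?ltW.
- by apply/ler_addgt0Pr => e e0; have [a [Aa lt]] := ap1 e e0; rewrite (le_trans (lb2 _ Aa)) ?ltW.
Qed.

Variables (T : Type) (S : set T) (obj : T -> R).

Lemma opt_value_le v z : opt_value S obj v -> S z -> v <= obj z.
Proof. by move=> [lb _] Sz; apply: lb; exists z. Qed.

Lemma opt_value_approx v e : opt_value S obj v -> 0 < e -> exists2 z, S z & obj z < v + e.
Proof. by move=> [_ ap] e0; have [_ [[z [Sz ->]] lt]] := ap e e0; exists z. Qed.

Lemma opt_value_feasible v : opt_value S obj v -> exists z, S z.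
Proof. by move=> /opt_value_approx/(_ ltr01)[z Sz _]; exists z. Qed.

Lemma opt_valueI v : (forall z, S z -> v <= obj z) ->
  (forall e, 0 < e -> exists2 z, S z & obj z < v + e) -> opt_value S obj v.
Proof.
move=> lb ap; split; first by move=> _ [z [Sz ->]]; apply: lb.
by move=> e e0; have [z Sz lt] := ap e e0; exists (obj z); split=> //; exists z.
Qed.
End OptValue.

Section Slopes.
Variable R : realType.

Lemma le_of_scaled_slack (x y c : R) : 0 <= c ->
  (forall e, 0 < e -> x <= y + e * c) -> x <= y.
Proof.
move=> c0 slack; apply/ler_addgt0Pr => e e0.
have c1 : 0 < c + 1 by lra.
apply: le_trans (slack _ (divr_gt0 e0 c1)) _; rewrite lerD2l mulrAC ler_pdivrMr //.
by rewrite ler_pM2l //; lra.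
Qed.

Lemma le_of_slope (a c : R) :
  (forall e, 0 < e -> exists2 d, 0 < d & forall s, 0 < s < d -> a * s <= c * s + e * s) ->
  a <= c.
Proof.
move=> slope; apply/ler_addgt0Pr => e e0; have [d d0 hd] := slope e e0.
have d2 : 0 < d / 2 by rewrite divr_gt0.
have := hd (d / 2); rewrite d2 /= -mulrDl ler_pM2r //; apply; lra.
Qed.

Lemma sum_delta n (lam : 'I_n -> R) i s :
  \sum_(k < n) lam k * (if k == i then s else 0) = lam i * s.
Proof. by rewrite (bigD1 i) //= eqxx big1 ?addr0 // => k /negbTE ->; rewrite mulr0. Qed.
End Slopes.

Section Sensitivity.
Variable R : realType.
Variables (n m : nat) (ends : 'I_m -> 'I_n * 'I_n) (Plo Phi PD : 'I_n -> R).
Variables (f : 'I_n -> R -> R) (F cF : 'I_m -> set (R * R)).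
Implicit Types (z : ('I_n -> R) * ('I_m -> R * R)) (L : 'I_n -> R).

Lemma net_flow_comb (x x0 : 'I_m -> R * R) t i :
  net_flow ends (fun j => (t * (x j).1 + (1 - t) * (x0 j).1,
                           t * (x j).2 + (1 - t) * (x0 j).2)) i
  = t * net_flow ends x i + (1 - t) * net_flow ends x0 i.
Proof. by rewrite /net_flow !big_split /= !mulrDr !mulr_sumr; ring. Qed.

Lemma lagrangianE mu z : lagrangian ends f PD mu z =
  cost f z - \sum_(i < n) mu i * (z.1 i - PD i - net_flow ends z.2 i).
Proof. by rewrite /lagrangian -sumrN; congr (_ + _); apply: eq_bigr => i _; ring. Qed.

Hypothesis f_mono : forall i x y, x <= y -> f i x <= f i y.

Lemma cost_mono z z' : (forall i, z'.1 i <= z.1 i) -> cost f z' <= cost f z.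
Proof. by move=> le_z; apply: ler_sum => i _; apply: f_mono. Qed.

Definition relaxation_repairable := forall L (P : 'I_n -> R) (x : 'I_m -> R * R),
  (exists z0, opf_feasible ends Plo Phi L F z0) ->
  (forall i, Plo i <= P i <= Phi i) -> (forall j, cF j (x j)) ->
  (forall i, net_flow ends x i <= P i - L i) ->
  exists2 z, opf_feasible ends Plo Phi L F z & forall i, z.1 i <= P i.

Hypothesis F_sub : forall j p, F j p -> cF j p.
Hypothesis repair : relaxation_repairable.

Lemma opt_value_load_mono L L' v v' : (forall i, L' i <= L i) ->
  opt_value (opf_feasible ends Plo Phi L F) (cost f) v ->
  opt_value (opf_feasible ends Plo Phi L' F) (cost f) v' -> v' <= v.
Proof.
move=> LL' hv hv'; apply/ler_addgt0Pr => e e0.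
have [z [hb [hbal hF]] lt] := opt_value_approx hv e0.
have [|z' fz' le_z] := repair (opt_value_feasible hv') hb (fun j => F_sub (hF j)).
  by move=> i; rewrite -hbal; have := LL' i; lra.
by rewrite (le_trans (opt_value_le hv' fz')) // (le_trans (cost_mono le_z)) // ltW.
Qed.

Lemma relaxed_opt_value L v : opt_value (opf_feasible ends Plo Phi L F) (cost f) v ->
  opt_value (opf_feasible ends Plo Phi L cF) (cost f) v.
Proof.
move=> hv; apply: opt_valueI.
  move=> z [hb [hbal hF]].
  have [|z' fz' le_z] := repair (opt_value_feasible hv) hb hF.
    by move=> i; rewrite hbal.
  exact: le_trans (opt_value_le hv fz') (cost_mono le_z).
move=> e e0; have [z [hb [hbal hF]] lt] := opt_value_approx hv e0.
by exists z => //; split=> //; split=> // j; apply: F_sub.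
Qed.

Hypothesis f_conv : forall i x y t, 0 <= t <= 1 ->
  f i (t * x + (1 - t) * y) <= t * f i x + (1 - t) * f i y.
Hypothesis cF_comb : forall j p q t, 0 <= t <= 1 -> cF j p -> F j q ->
  cF j (t * p.1 + (1 - t) * q.1, t * p.2 + (1 - t) * q.2).

(* Moving a fraction [t] of the way from a feasible point towards a relaxed one
   shifts the loads by [t] times the imbalance of the relaxed point. *)
Lemma opt_value_comb_le z z0 t v :
  (forall i, Plo i <= z.1 i <= Phi i) -> (forall j, cF j (z.2 j)) ->
  opf_feasible ends Plo Phi PD F z0 -> 0 <= t <= 1 ->
  opt_value (opf_feasible ends Plo Phi
    (fun i => PD i + t * (z.1 i - PD i - net_flow ends z.2 i)) F) (cost f) v ->
  v <= t * cost f z + (1 - t) * cost f z0.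
Proof.
move=> hb hF [hb0 [hbal0 hF0]] t01 hv; case/andP: (t01) => t0 t1.
pose P i := t * z.1 i + (1 - t) * z0.1 i.
pose x j := (t * (z.2 j).1 + (1 - t) * (z0.2 j).1, t * (z.2 j).2 + (1 - t) * (z0.2 j).2).
have [|||z' fz' le_z] := repair (opt_value_feasible hv) (P := P) (x := x).
- move=> i; have /andP[a1 a2] := hb i; have /andP[b1 b2] := hb0 i; rewrite /P.
  by apply/andP; split; nra.
- by move=> j; apply: cF_comb.
- move=> i; rewrite /x net_flow_comb -hbal0 /P le_eqVlt; apply/orP; left.
  by apply/eqP; ring.
apply: le_trans (opt_value_le hv fz') _; apply: le_trans (cost_mono (z := (P, x)) le_z) _.
by rewrite /cost !mulr_sumr -big_split /=; apply: ler_sum => i _; apply: f_conv.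
Qed.

Variable lam : 'I_n -> R.
Hypothesis lmp : is_lmp ends Plo Phi PD F f lam.

Lemma lmp_expansion f0 e : opt_value (opf_feasible ends Plo Phi PD F) (cost f) f0 ->
  0 < e -> exists2 d, 0 < d & forall eps : 'I_n -> R, (forall i, `|eps i| < d) ->
    exists2 v, opt_value (opf_feasible ends Plo Phi (fun i => PD i + eps i) F) (cost f) v &
      `|v - f0 - \sum_(i < n) lam i * eps i| <= e * \big[Num.max/0]_(i < n) `|eps i|.
Proof.
move=> hf0 e0; have [f1 [hf1 expand]] := lmp.
rewrite (is_inf_unique hf0 hf1); have [d [d0 hd]] := expand e e0.
by exists d => // eps small; have [v [hv hvb]] := hd eps small; exists v.
Qed.

(* Convexity of the value function along the segment towards a relaxed point [z],
   combined with the first-order expansion, gives the Lagrangian lower bound. *)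
Lemma lmp_lagrangian_lb f0 z : opt_value (opf_feasible ends Plo Phi PD F) (cost f) f0 ->
  (forall i, Plo i <= z.1 i <= Phi i) -> (forall j, cF j (z.2 j)) ->
  f0 <= lagrangian ends f PD lam z.
Proof.
move=> hf0 hb hF; rewrite lagrangianE.
pose eps i := z.1 i - PD i - net_flow ends z.2 i.
set Lam := \sum_(i < n) _; set M := \sum_(i < n) `|eps i|.
have M0 : 0 <= M by apply: sumr_ge0 => i _.
have eps_M i : `|eps i| <= M by rewrite /M (bigD1 i) //= lerDl sumr_ge0.
apply: (@le_of_scaled_slack _ _ _ (M + 1)); first lra.
move=> e e0; have [d d0 hd] := lmp_expansion hf0 e0.
have M1 : 0 < M + 1 by lra.
set t := Num.min 1 (d / (M + 1)).
have t0 : 0 < t by rewrite lt_min ltr01 divr_gt0.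
have t1 : t <= 1 by rewrite ge_min lexx.
have tM : t * (M + 1) <= d by rewrite -ler_pdivlMr // ge_min lexx orbT.
have teps i : `|t * eps i| <= t * M by rewrite normrM gtr0_norm // ler_pM2l.
have [|v hv hvb] := hd (fun i => t * eps i).
  by move=> i; apply: le_lt_trans (teps i) _; nra.
have [z0 fz0 cz0] := opt_value_approx hf0 (mulr_gt0 t0 e0).
have t01 : 0 <= t <= 1 by rewrite (ltW t0) t1.
have cvx := opt_value_comb_le hb hF fz0 t01 hv.
have bm : \big[Num.max/0]_(i < n) `|t * eps i| <= t * M.
  by apply: bigmax_le => [|i _]; [rewrite mulr_ge0 // ltW | exact: teps].
have sl : \sum_(i < n) lam i * (t * eps i) = t * Lam.
  by rewrite /Lam mulr_sumr; apply: eq_bigr => i _; rewrite /eps; ring.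
rewrite sl ler_norml in hvb; case/andP: hvb => hvb _.
have h1 : e * \big[Num.max/0]_(i < n) `|t * eps i| <= e * (t * M) by rewrite ler_pM2l.
have h2 : (1 - t) * cost f z0 <= (1 - t) * (f0 + t * e).
  by apply: ler_wpM2l; [rewrite subr_ge0 | exact: ltW].
have key : 0 <= t * (cost f z - Lam + e * (M + 1) - f0).
  have : 0 <= t * t * e by rewrite !mulr_ge0 // ltW.
  nra.
by move: key; rewrite pmulr_rge0 // => h; lra.
Qed.

Lemma lmp_is_multiplier : is_balance_multiplier ends Plo Phi PD cF f lam.
Proof.
have [f0 [hf0 _]] := lmp; exists f0; split; first exact: relaxed_opt_value.
split; first by move=> _ [z [hb [hF ->]]]; exact: lmp_lagrangian_lb.
move=> e e0; have [z [hb [hbal hF]] lt] := opt_value_approx hf0 e0.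
exists (lagrangian ends f PD lam z); split.
  by exists z; split=> //; split=> // j; apply: F_sub.
by rewrite lagrangianE big1 ?subr0 // => i _; rewrite hbal; ring.
Qed.

Lemma lmp_directional f0 i e : opt_value (opf_feasible ends Plo Phi PD F) (cost f) f0 ->
  0 < e -> exists2 d, 0 < d & forall s, `|s| < d ->
    exists2 v, opt_value (opf_feasible ends Plo Phi
                 (fun k => PD k + (if k == i then s else 0)) F) (cost f) v &
      `|v - f0 - lam i * s| <= e * `|s|.
Proof.
move=> hf0 e0; have [d d0 hd] := lmp_expansion hf0 e0; exists d => // s hs.
have [|v hv hvb] := hd (fun k => if k == i then s else 0).
  by move=> k; case: ifP; rewrite ?normr0.
exists v => //; rewrite sum_delta in hvb; apply: le_trans hvb _.
by rewrite ler_pM2l //; apply: bigmax_le => // k _; case: ifP; rewrite ?normr0.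
Qed.

Lemma multiplier_value_lb mu f0 i s v :
  opt_value (opf_feasible ends Plo Phi PD F) (cost f) f0 ->
  is_balance_multiplier ends Plo Phi PD cF f mu ->
  opt_value (opf_feasible ends Plo Phi (fun k => PD k + (if k == i then s else 0)) F)
    (cost f) v ->
  f0 + mu i * s <= v.
Proof.
move=> hf0 [w [hw [lagr _]]] hv.
rewrite -(is_inf_unique hw (relaxed_opt_value hf0)).
apply/ler_addgt0Pr => eta eta0; have [z [hb [hbal hF]] lt] := opt_value_approx hv eta0.
have : w <= lagrangian ends f PD mu z.
  by apply: lagr; exists z; split=> //; split=> // j; apply: F_sub.
have -> : lagrangian ends f PD mu z = cost f z - mu i * s.
  rewrite lagrangianE -(sum_delta mu i s); congr (_ - _); apply: eq_bigr => k _.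
  by rewrite -(hbal k); case: ifP => _; ring.
lra.
Qed.

Lemma lmp_multiplier_unique mu :
  is_balance_multiplier ends Plo Phi PD cF f mu -> forall i, lam i = mu i.
Proof.
have [f0 [hf0 _]] := lmp; move=> hmu i.
apply/eqP; rewrite eq_le; apply/andP; split; apply: le_of_slope => e e0;
  have [d d0 hd] := lmp_directional i hf0 e0; exists d => // s /andP[s0 sd].
- have [|v hv] := hd (- s); first by rewrite normrN gtr0_norm.
  have := multiplier_value_lb hf0 hmu hv.
  by rewrite normrN (gtr0_norm s0) ler_norml => h /andP[_ h2]; lra.
- have [|v hv] := hd s; first by rewrite gtr0_norm.
  have := multiplier_value_lb hf0 hmu hv.
  by rewrite (gtr0_norm s0) ler_norml => h /andP[_ h2]; lra.
Qed.

Lemma lmp_ge0 i : 0 <= lam i.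
Proof.
have [f0 [hf0 _]] := lmp; apply: le_of_slope => e e0.
have [d d0 hd] := lmp_directional i hf0 e0; exists d => // s /andP[s0 sd].
have [|v hv] := hd (- s); first by rewrite normrN gtr0_norm.
have : v <= f0.
  apply: opt_value_load_mono hf0 hv => k; case: ifP => _; lra.
by rewrite normrN (gtr0_norm s0) ler_norml => h /andP[h1 _]; lra.
Qed.
End Sensitivity.

Lemma tree_relaxation_repairable (R : realType) (n m : nat) (ends : 'I_m -> 'I_n * 'I_n)
    (g b thlo thhi : 'I_m -> R) (V Plo Phi : 'I_n -> R) :
  is_tree ends -> (forall i, 0 < V i) -> (forall j, 0 <= g j /\ 0 <= b j) ->
  (forall j, - pi <= thlo j <= 0 /\ 0 <= thhi j <= pi) ->
  (forall j, - arctan_ratio (b j) (g j) < thlo j /\ thlo j <= thhi j /\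
             thhi j < arctan_ratio (b j) (g j)) ->
  relaxation_repairable ends Plo Phi (edge_region ends V g b thlo thhi)
    (fun j => convex_hull (edge_region ends V g b thlo thhi j)).
Proof.
move=> [card_edges conn] V0 gb thb tha L P x [z0 [hb0 [hbal0 hF0]]] hP hx hnet.
pose u j := line_Pik (V (ends j).1) (V (ends j).2) (g j) (b j).
pose w j := line_Pki (V (ends j).1) (V (ends j).2) (g j) (b j).
have normal j th : thlo j <= th <= thhi j ->
    (g j = 0 /\ b j = 0) \/ `|g j * sin th| < b j * cos th.
  by have [g0 b0] := gb j; have [lo_ok [_ hi_ok]] := tha j; exact: flow_normal_pos.
have mono j t t' : thlo j <= t -> t <= t' -> t' <= thhi j ->
    u j t <= u j t' /\ w j t' <= w j t.
  have [/andP[pi_lo _] /andP[_ hi_pi]] := thb j.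
  apply: line_flow_monotone (ltW (V0 _)) (ltW (V0 _)) pi_lo hi_pi _ => th hth.
  by case: (normal j th hth) => [[-> ->] | /ltW //]; rewrite !mul0r normr0.
have cu j : continuous (u j) by exact: line_Pik_continuous.
have cw j : continuous (w j) by exact: line_Pki_continuous.
have n_gt0 : (0 < n)%N by rewrite -card_edges.
have leaf := tree_edge_set_leaf (conn (Ordinal n_gt0)) card_edges.
have [th0 th0P] := choice hF0.
have [th1 th1P] := choice (fun j => flow_hull_dominated (ltW (V0 _)) (ltW (V0 _))
                                      (gb j).1 (gb j).2 (normal j) (hx j)).
have z0E : (fun j => (u j (th0 j), w j (th0 j))) = z0.2.
  by apply: boolp.funext => j; have [_ ->] := th0P j.
have [|||th [box hth]] := tree_flow_sandwich mono cu cw leaf (S := [set: 'I_m])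
    (a := fun i => Plo i - L i) (b := fun i => P i - L i).
- by move=> i; have /andP[p1 p2] := hP i; lra.
- exists th0; split; first by move=> j; have [] := th0P j.
  by move=> i; rewrite partial_net_flowT z0E -hbal0; have /andP[p1 p2] := hb0 i; lra.
- exists th1; split; first by move=> j; have [] := th1P j.
  move=> i; rewrite partial_net_flowT; apply: le_trans (hnet i).
  by rewrite /net_flow; apply: lerD; apply: ler_sum => j _; have [_ []] := th1P j.
exists (fun i => L i + partial_net_flow ends u w [set: 'I_m] th i,
        fun j => (u j (th j), w j (th j))); last by move=> i /=; have /andP[_ q] := hth i; lra.
split; last split.
- by move=> i /=; have /andP[q1 q2] := hth i; have /andP[p1 p2] := hP i; apply/andP; split; lra.
- by move=> i /=; rewrite partial_net_flowT; ring.
- by move=> j /=; exists (th j); split; [exact: box | ].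
Qed.

Theorem theorem2 (R : realType) (n m : nat) (ends : 'I_m -> 'I_n * 'I_n)
  (g b thlo thhi : 'I_m -> R) (V : 'I_n -> R) (Plo Phi PD : 'I_n -> R)
  (f : 'I_n -> R -> R) (lam : 'I_n -> R) :
  is_tree ends ->
  (forall i, 0 < V i) ->
  (forall j, 0 <= g j /\ 0 <= b j) ->
  (forall j, - pi <= thlo j <= 0 /\ 0 <= thhi j <= pi) ->
  (forall j, - arctan_ratio (b j) (g j) < thlo j /\ thlo j <= thhi j /\
             thhi j < arctan_ratio (b j) (g j)) ->
  (forall i x y, x <= y -> f i x <= f i y) ->
  (forall i x y t, 0 <= t <= 1 ->
     f i (t * x + (1 - t) * y) <= t * f i x + (1 - t) * f i y) ->
  is_lmp ends Plo Phi PD (edge_region ends V g b thlo thhi) f lam ->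
  let cF := fun j => convex_hull (edge_region ends V g b thlo thhi j) in
  is_balance_multiplier ends Plo Phi PD cF f lam /\
  (forall mu, is_balance_multiplier ends Plo Phi PD cF f mu ->
     forall i, lam i = mu i) /\
  (forall i, 0 <= lam i).
Proof.
move=> tree V0 gb thb tha f_mono f_conv lmp cF.
have repair := tree_relaxation_repairable (Plo := Plo) (Phi := Phi) tree V0 gb thb tha.
have F_sub j p : edge_region ends V g b thlo thhi j p -> cF j p by exact: convex_hull_sub.
have cF_comb j p q t := @convex_hull_comb R (edge_region ends V g b thlo thhi j) p q t.
split; first exact (lmp_is_multiplier f_mono F_sub repair f_conv cF_comb lmp).
split; first exact (lmp_multiplier_unique f_mono F_sub repair lmp).
exact (lmp_ge0 f_mono F_sub repair lmp).
Qed.
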